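(* Let $\mathbb{F}_q$ be a finite field and $m\ge2$. Let $X_1,\dots,X_{m-1}$ be independent uniformly random elements of $\mathbb{F}_q$. Fix arbitrary functions $f_1,\dots,f_m:\mathbb{F}_q^{m-1}\to\mathbb{F}_q$, where for $k\le m-1$ the function $f_k$ is evaluated as $f_k(X_{[m-1]\setminus\{k\}},y)$ (its arguments being all $X_i$ with $i\in\{1,\dots,m-1\}\setminus\{k\}$ together with $y\in\mathbb{F}_q$), and $f_m$ is evaluated as $f_m(X_1,\dots,X_{m-1})$. For $y\in\mathbb{F}_q$ let $F_y$ be the event $$X_1X_2\cdots X_{m-1}\,y=\sum_{k=1}^{m-1}f_k(X_{[m-1]\setminus\{k\}},y)+f_m(X_1,\dots,X_{m-1}).$$ Then for all $y\neq z$ in $\mathbb{F}_q$, $\Pr[F_y\wedge F_z]\le\omega_{m-1}$, where $\omega_{m-1}$ is the optimal winning probability of the $(m-1)$-player game defined below (over the same field $\mathbb{F}_q$).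
   Context: For $r\ge1$, the $r$-player ''Number on the Forehead'' multiplication game over $\mathbb{F}_q$: inputs $X_1,\dots,X_r$ are independent and uniform on $\mathbb{F}_q$; player $k$ sees all inputs except $X_k$ (denoted $X_{[r]\setminus\{k\}}$) and outputs $Y_k=f_k(X_{[r]\setminus\{k\}})$ for a function $f_k:\mathbb{F}_q^{r-1}\to\mathbb{F}_q$ (for $r=1$ this is a constant). The game is won iff $\prod_{k=1}^rX_k=\sum_{k=1}^rY_k$. Define $\omega_r(f_1,\dots,f_r)=\Pr[\prod_{k=1}^rX_k=\sum_{k=1}^rf_k(X_{[r]\setminus\{k\}})]$ and $\omega_r=\max_{f_1,\dots,f_r}\omega_r(f_1,\dots,f_r)$, the maximum over all functions $\mathbb{F}_q^{r-1}\to\mathbb{F}_q$. *)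

From HB Require Import structures.
From mathcomp Require Import all_boot all_order all_algebra all_field.
Set Implicit Arguments. Unset Strict Implicit. Unset Printing Implicit Defensive.
Import Order.TTheory GRing.Theory Num.Theory.
Local Open Scope ring_scope.

Definition prob (T : finType) (A : pred T) : rat := #|A|%:R / #|T|%:R.

(* What player k sees in the r-player game: X_{[r]\{k}}, in increasing
   index order, as a vector in F^(r-1). *)
Definition view (F : Type) (r : nat) (X : {ffun 'I_r -> F}) (k : 'I_r)
  : {ffun 'I_r.-1 -> F} := [ffun j => X (lift k j)].

Definition game_win (F : finFieldType) (r : nat)
  (f : 'I_r -> {ffun 'I_r.-1 -> F} -> F) : pred {ffun 'I_r -> F} :=
  fun X => (\prod_(k < r) X k == \sum_(k < r) f k (view X k)).

Definition omega_f (F : finFieldType) (r : nat)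
  (f : 'I_r -> {ffun 'I_r.-1 -> F} -> F) : rat :=
  prob (game_win f).

Definition omega (F : finFieldType) (r : nat) : rat :=
  \big[Num.max/0]_(f : {ffun 'I_r -> {ffun {ffun 'I_r.-1 -> F} -> F}})
     omega_f (fun k => f k).

(* Argument of f_k (k in [m-1], m-1 = p.+1) : (X_{[m-1]\{k}}, y) in F^(m-1). *)
Definition arg_with (F : Type) (p : nat) (X : {ffun 'I_p.+1 -> F}) (k : 'I_p.+1)
  (y : F) : {ffun 'I_p.+1 -> F} :=
  [ffun j : 'I_p.+1 => match unlift ord_max j with
                       | Some j' => X (lift k j')
                       | None => y
                       end].

(* Event F_y, for m = p.+2 players: fs k is f_(k+1) for k < m-1, fm is f_m. *)
Definition event_F (F : finFieldType) (p : nat)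
  (fs : 'I_p.+1 -> {ffun 'I_p.+1 -> F} -> F) (fm : {ffun 'I_p.+1 -> F} -> F)
  (y : F) : pred {ffun 'I_p.+1 -> F} :=
  fun X => (\prod_(i < p.+1) X i) * y == \sum_(k < p.+1) fs k (arg_with X k y) + fm X.

From HB Require Import structures.
From mathcomp Require Import all_boot all_order all_algebra all_field.
From mathcomp Require Import ring.
Import Order.TTheory GRing.Theory Num.Theory.
Set Implicit Arguments. Unset Strict Implicit.
Local Open Scope ring_scope.

(** Subtracting the equations of F_y and F_z eliminates f_m and leaves
    X_1 ... X_(m-1) (y - z) = sum_k (f_k(., y) - f_k(., z)); dividing by
    y - z exhibits every outcome of F_y /\ F_z as a win of the (m-1)-player
    game in which player k plays (f_k(., y) - f_k(., z)) / (y - z). *)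

Lemma prob_subset (T : finType) (A B : pred T) :
  (forall x, A x -> B x) -> prob A <= prob B.
Proof.
move=> AB; rewrite /prob ler_wpM2r ?invr_ge0 ?ler0n // ler_nat.
by apply/subset_leq_card/subsetP => x; rewrite !unfold_in; apply: AB.
Qed.

Lemma omega_f_le_omega (F : finFieldType) (r : nat)
    (g : {ffun 'I_r -> {ffun {ffun 'I_r.-1 -> F} -> F}}) :
  omega_f (fun k => g k) <= omega F r.
Proof. by rewrite /omega; apply: le_bigmax. Qed.

Definition arg_view (F : Type) (p : nat) (v : {ffun 'I_p -> F}) (y : F)
  : {ffun 'I_p.+1 -> F} :=
  [ffun j : 'I_p.+1 => if unlift ord_max j is Some j' then v j' else y].

Lemma arg_withE (F : Type) (p : nat) (X : {ffun 'I_p.+1 -> F}) k y :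
  arg_with X k y = arg_view (view X k) y.
Proof.
by apply/ffunP => j; rewrite !ffunE; case: (unlift _ _) => // j'; rewrite ffunE.
Qed.

Definition difference_strategy (F : finFieldType) (p : nat)
  (fs : 'I_p.+1 -> {ffun 'I_p.+1 -> F} -> F) (y z : F)
  : {ffun 'I_p.+1 -> {ffun {ffun 'I_p.+1.-1 -> F} -> F}} :=
  [ffun k => [ffun v => (fs k (arg_view v y) - fs k (arg_view v z)) / (y - z)]].

Lemma event_F2_game_win (F : finFieldType) (p : nat)
    (fs : 'I_p.+1 -> {ffun 'I_p.+1 -> F} -> F) (fm : {ffun 'I_p.+1 -> F} -> F)
    (y z : F) X :
  y != z -> event_F fs fm y X -> event_F fs fm z X ->
  game_win (fun k => difference_strategy fs y z k) X.
Proof.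
move=> yz /eqP Fy /eqP Fz; rewrite /game_win.
have -> : \sum_(k < p.+1) difference_strategy fs y z k (view X k) =
    (\sum_(k < p.+1) fs k (arg_with X k y)
      - \sum_(k < p.+1) fs k (arg_with X k z)) / (y - z).
  by rewrite -sumrB mulr_suml; apply: eq_bigr => k _; rewrite !ffunE !arg_withE.
have yz0 : y - z != 0 by rewrite subr_eq0.
apply/eqP/(mulIf yz0); rewrite divfK // mulrBr Fy Fz; ring.
Qed.

(* m = p.+2 (so m >= 2), m - 1 = p.+1. *)
Theorem propositionB1 (F : finFieldType) (p : nat)
  (fs : 'I_p.+1 -> {ffun 'I_p.+1 -> F} -> F) (fm : {ffun 'I_p.+1 -> F} -> F)
  (y z : F) :
  y != z ->
  prob (fun X => event_F fs fm y X && event_F fs fm z X) <= omega F p.+1.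
Proof.
move=> yz; apply: le_trans (omega_f_le_omega (difference_strategy fs y z)).
by apply: prob_subset => X /andP [Fy Fz]; apply: event_F2_game_win Fy Fz.
Qed.
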